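(* Let $d>1$ be a square-free integer, $F=\mathbf Q(\sqrt d)$, and let $(V,h,\psi)$ be a Hodge structure of K3 type with $\mathrm{End}_{Hod}(V)=F$ and $m=\dim_F V$ odd. Then $a=d+\sqrt d$ is totally positive, and the quadratic spaces $(V,\psi)$ and $(V,\psi_a)$, where $\psi_a(v,w)=\psi(av,w)$, are not isometric over $\mathbf Q$.
   Context: A Hodge structure of K3 type is a simple polarized rational weight two Hodge structure with $\dim V^{2,0}=1$; $\mathrm{End}_{Hod}(V)$ is the algebra of endomorphisms of the Hodge structure. An element of a totally real field is totally positive if all its real embeddings are positive. *)

From HB Require Import structures.
From mathcomp Require Import all_boot all_order all_algebra.
From mathcomp Require Import complex.
From mathcomp Require Import reals Rstruct.
From Stdlib Require Rdefinitions.
Set Implicit Arguments. Unset Strict Implicit. Unset Printing Implicit Defensive.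
Import Order.TTheory GRing.Theory Num.Theory.
Local Open Scope ring_scope.

Definition RR : realType := Rdefinitions.R.
Definition CC := complex RR.

Definition squarefree (n : nat) : Prop :=
  forall p : nat, prime p -> ~~ (p * p %| n)%N.

(* V = Q^n (row vectors), a linear endomorphism acts on rows by v |-> v *m A,
   a bilinear form psi is given by its Gram matrix P: psi(v,w) = v *m P *m w^T. *)
Definition cplx {m n : nat} (A : 'M[rat]_(m, n)) : 'M[CC]_(m, n) :=
  map_mx (fun q : rat => ratr q) A.
Definition cconj {m n : nat} (A : 'M[CC]_(m, n)) : 'M[CC]_(m, n) :=
  map_mx (fun z : CC => z^*) A.

Definition formC {n : nat} (P : 'M[rat]_n) (x y : 'rV[CC]_n) : CC :=
  (x *m cplx P *m y^T) 0 0.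

(* A rational weight two Hodge structure on Q^n with h^{2,0} = 1, given by
   V^{2,0} = <w>, V^{1,1} = row space of H, V^{0,2} = <conj w>:
   V_C = V^{2,0} (+) V^{1,1} (+) V^{0,2}, with V^{1,1} stable under conjugation. *)
Definition hodge_wt2_h20_1 (n : nat) (w : 'rV[CC]_n) (H : 'M[CC]_n) : Prop :=
  [/\ w != 0,
      (cconj H == H)%MS,
      \rank H = (n - 2)%N &
      row_full (col_mx (col_mx w H) (cconj w))].

(* psi is a polarization of that Hodge structure (Hodge-Riemann relations
   for weight 2: psi(V^{p,q}, V^{p',q'}) = 0 unless p+p' = 2,
   psi(x, conj x) > 0 on V^{2,0}\{0}, psi(x, conj x) < 0 on V^{1,1}\{0}). *)
Definition polarization (n : nat) (P : 'M[rat]_n) (w : 'rV[CC]_n)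
    (H : 'M[CC]_n) : Prop :=
  [/\ P^T = P,
      formC P w w = 0,
      w *m cplx P *m H^T = 0,
      0 < formC P w (cconj w) &
      forall x : 'rV[CC]_n, (x <= H)%MS -> x != 0 -> formC P x (cconj x) < 0].

(* Sub-Hodge structures: rational subspaces W (row space of a rational
   matrix) with W_C = (W_C cap V^{2,0}) + (W_C cap V^{1,1}) + (W_C cap V^{0,2}). *)
Definition sub_hodge (n : nat) (w : 'rV[CC]_n) (H : 'M[CC]_n)
    (W : 'M[rat]_n) : Prop :=
  (cplx W <= (cplx W :&: w) + (cplx W :&: H) + (cplx W :&: cconj w))%MS.

Definition simple_hodge (n : nat) (w : 'rV[CC]_n) (H : 'M[CC]_n) : Prop :=
  forall W : 'M[rat]_n, sub_hodge w H W -> \rank W = 0%N \/ \rank W = n.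

Definition K3_type (n : nat) (P : 'M[rat]_n) (w : 'rV[CC]_n) (H : 'M[CC]_n)
  : Prop :=
  [/\ hodge_wt2_h20_1 w H, polarization P w H & simple_hodge w H].

(* Endomorphisms of the Hodge structure: Q-linear maps whose complexification
   preserves every V^{p,q} (V^{0,2} is then preserved automatically, being
   the conjugate of V^{2,0} and the map being rational; we include it anyway). *)
Definition hodge_endo (n : nat) (w : 'rV[CC]_n) (H : 'M[CC]_n)
    (A : 'M[rat]_n) : Prop :=
  [/\ (w *m cplx A <= w)%MS, (H *m cplx A <= H)%MS &
      (cconj w *m cplx A <= cconj w)%MS].

(* End_Hod(V) = F = Q(sqrt d), with sqrt d acting as S:
   S is a Hodge endomorphism, S^2 = d, and End_Hod(V) = Q + Q S. *)
Definition End_hod_is_quad (n : nat) (w : 'rV[CC]_n) (H : 'M[CC]_n)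
    (d : nat) (S : 'M[rat]_n) : Prop :=
  [/\ hodge_endo w H S, S *m S = (d%:R)%:M &
      forall A : 'M[rat]_n, hodge_endo w H A ->
        exists x y : rat, A = x%:M + y *: S].

(* x + y sqrt d in Q(sqrt d) is totally positive: positive under both real
   embeddings sqrt d |-> r, r a real square root of d. *)
Definition totally_positive_quad (d : nat) (x y : rat) : Prop :=
  forall r : RR, r ^+ 2 = d%:R -> 0 < ratr x + ratr y * r.

Definition isometric (n : nat) (P1 P2 : 'M[rat]_n) : Prop :=
  exists g : 'M[rat]_n, g \in unitmx /\ g *m P2 *m g^T = P1.

From HB Require Import structures.
From mathcomp Require Import all_boot all_order all_algebra complex reals Rstruct.
From mathcomp Require Import zify ring lra.
Set Implicit Arguments. Unset Strict Implicit. Unset Printing Implicit Defensive.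
Import Order.TTheory GRing.Theory Num.Theory.
Local Open Scope ring_scope.

(* Write a = d + sqrt d, so that S acts as sqrt d and V is an F-vector space of
   dimension m. The form psi is nondegenerate, and multiplication by a has
   determinant N(a)^m = (d^2 - d)^m. An isometry g between psi and psi_a gives
   det(psi) = det(g)^2 N(a)^m det(psi), so N(a)^m, and since m is odd also
   N(a) = d (d - 1), would be a rational square. It is not, as
   (d - 1)^2 < d (d - 1) < d^2. *)

(* If (a/b)^2 = N with a, b coprime then b divides a^2, hence b = 1. *)
Lemma rat_sqr_natP (N : nat) (r : rat) :
  r ^+ 2 = N%:R -> exists k : nat, N = (k * k)%N.
Proof.
move=> rN; exists `|numq r|%N.
have den0 : (denq r)%:~R != 0 :> rat by rewrite intr_eq0 denq_neq0.
have /intr_inj num2 : ((numq r) ^+ 2)%:~R = (N%:Z * (denq r) ^+ 2)%:~R :> rat.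
  rewrite -[r]divq_num_den in rN.
  by rewrite !expr2 !intrM -[N%:Z%:~R]/(N%:R) -rN expr2; field.
have numN : (`|numq r| * `|numq r| = N * (`|denq r| * `|denq r|))%N.
  by apply/eqP; rewrite -eqz_nat -!abszM /= -!expr2 num2 abszM.
have den_num : coprime `|denq r| `|numq r| by rewrite coprime_sym coprime_num_den.
have : (`|denq r| %| `|numq r| * `|numq r|)%N.
  by rewrite numN dvdn_mull // dvdn_mulr.
rewrite (Gauss_dvdr _ den_num) => den_dvd.
have /eqP den1 : `|denq r|%N == 1%N by rewrite -(gcdn_idPl den_dvd).
by rewrite numN den1 !muln1.
Qed.

Lemma squarefree_rat_nsqr (d : nat) :
  (1 < d)%N -> squarefree d -> forall r : rat, r ^+ 2 != d%:R.
Proof.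
move=> d_gt1 d_sqf r; apply/negP => /eqP /rat_sqr_natP [k dk].
have k_gt1 : (1 < k)%N by move: d_gt1; rewrite dk; nia.
by have := d_sqf _ (pdiv_prime k_gt1); rewrite dk dvdn_mul // pdiv_dvd.
Qed.

Lemma odd_expr_mul_sqr1 (F : fieldType) (c t : F) (m : nat) :
  odd m -> c ^+ m * t ^+ 2 = 1 -> exists r : F, r ^+ 2 = c.
Proof.
move=> m_odd cmt.
have c_t : c * (c ^+ m./2 * t) ^+ 2 = 1.
  rewrite -cmt -[in RHS](odd_double_half m) m_odd add1n -mul2n [in RHS]exprS.
  by rewrite mulnC exprM; set a := c ^+ m./2; ring.
have ct0 : c ^+ m./2 * t != 0.
  by apply: contra_eq_neq c_t => ->; rewrite expr0n mulr0 eq_sym oner_eq0.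
exists (c ^+ m./2 * t)^-1.
by apply: (mulIf (expf_neq0 2 ct0)); rewrite -exprMn mulVf // expr1n -c_t mulrC.
Qed.

(* (d - 1)^2 < d (d - 1) < d^2 *)
Lemma mul_pred_neq_sqr (d j : nat) : (1 < d)%N -> (d * d.-1 != j * j)%N.
Proof.
move=> d_gt1; apply/eqP => dj.
have : (j < d)%N by rewrite ltnNge; apply/negP => le_dj; move: dj; nia.
have : (d.-1 < j)%N by rewrite ltnNge; apply/negP => le_jd; move: dj; nia.
lia.
Qed.

Lemma horner_char_poly (R : comNzRingType) n (A : 'M[R]_n) (x : R) :
  (char_poly A).[x] = \det (x%:M - A).
Proof.
rewrite -horner_evalE /char_poly -det_map_mx /char_poly_mx; congr (\det _).
by apply/matrixP=> i j; rewrite !mxE raddfB/= raddfMn/= /horner_eval !hornerE.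
Qed.

Lemma char_polyN_mul (R : comNzRingType) n (S : 'M[R]_n) (c : R) :
  S *m S = c%:M -> char_poly (- S) * char_poly S = ('X^2 - c%:P) ^+ n.
Proof.
move=> SSc; rewrite /char_poly -det_mulmx /char_poly_mx map_mxN opprK.
rewrite mulmxDl !mulmxBr -!scalar_mxM mul_mx_scalar mul_scalar_mx.
rewrite -map_mxM SSc map_scalar_mx addrA subrK -raddfB -expr2.
by rewrite det_scalar.
Qed.

Lemma dvdp_exp_irredp (F : fieldType) (q f : {poly F}) (k : nat) :
  irreducible_poly q -> f %| q ^+ k -> exists j, f %= q ^+ j.
Proof.
move=> q_irr; elim: k f => [|k IHk] f.
  rewrite dvdp1 => /size_poly1P [c c0 ->].
  by exists 0%N; rewrite polyC_eqp1.
have q0 : q != 0 by exact: irredp_neq0.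
have [fq_coprime|fq_ncoprime] := boolP (coprimep f q).
  by rewrite exprSr Gauss_dvdpl //; apply: IHk.
have q_dvd_f : q %| f.
  have [_ /(_ (gcdp f q) fq_ncoprime (dvdp_gcdr f q)) gcd_q] := q_irr.
  by rewrite -(eqp_dvdl _ gcd_q) dvdp_gcdl.
rewrite -(divpK q_dvd_f) exprSr dvdp_mul2r // => /IHk [j fj].
by exists j.+1; rewrite exprSr eqp_mul2r.
Qed.

Lemma irredp_X2subC (F : fieldType) (c : F) :
  (forall r : F, r ^+ 2 != c) -> irreducible_poly ('X^2 - c%:P).
Proof.
move=> c_nsq; apply: cubic_irreducible; first by rewrite size_XnsubC.
by move=> r; rewrite /root !hornerE subr_eq0.
Qed.

(* An endomorphism S with S^2 = c makes F^n a vector space over F(sqrt c), and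
   det (x + S) is the norm of x + sqrt c raised to the dimension n/2. *)
Lemma det_scalar_add_sqrt (F : fieldType) n (S : 'M[F]_n) (c : F) :
  (forall r : F, r ^+ 2 != c) -> S *m S = c%:M ->
  forall x : F, \det (x%:M + S) = (x ^+ 2 - c) ^+ n./2.
Proof.
move=> c_nsq SSc x.
have q_monic : 'X^2 - c%:P \is monic by rewrite monicXnsubC.
have : char_poly (- S) %| ('X^2 - c%:P) ^+ n.
  by rewrite -(char_polyN_mul SSc) dvdp_mulr.
case/(dvdp_exp_irredp (irredp_X2subC c_nsq)) => j.
rewrite eqp_monic ?char_poly_monic ?monic_exp // => /eqP charNS.
have size_j := size_exp ('X^2 - c%:P) j.
rewrite -charNS size_char_poly size_XnsubC //= in size_j.
have -> : n./2 = j by rewrite size_j mul2n doubleK.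
by rewrite -[S]opprK -horner_char_poly charNS !hornerE.
Qed.

Lemma cconjK m n (A : 'M[CC]_(m, n)) : cconj (cconj A) = A.
Proof. by apply/matrixP => i j; rewrite !mxE conjCK. Qed.

Lemma cconj_cplx m n (A : 'M[rat]_(m, n)) : cconj (cplx A) = cplx A.
Proof. by apply/matrixP => i j; rewrite !mxE fmorph_rat. Qed.

Lemma cconj_tr m n (A : 'M[CC]_(m, n)) : cconj A^T = (cconj A)^T.
Proof. by apply/matrixP => i j; rewrite !mxE. Qed.

Section Form.
Variables (n : nat) (P : 'M[rat]_n).

Lemma formCDl x1 x2 y : formC P (x1 + x2) y = formC P x1 y + formC P x2 y.
Proof. by rewrite /formC !mulmxDl mxE. Qed.

Lemma formCZl (c : CC) x y : formC P (c *: x) y = c * formC P x y.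
Proof. by rewrite /formC -!scalemxAl mxE. Qed.

Lemma formC_sym x y : P^T = P -> formC P x y = formC P y x.
Proof.
move=> P_sym; rewrite /formC.
have -> : x *m cplx P *m y^T = (y *m cplx P *m x^T)^T.
  by rewrite !trmx_mul trmxK /cplx map_trmx P_sym mulmxA.
by rewrite mxE.
Qed.

Lemma formC_conj x y : formC P (cconj x) (cconj y) = (formC P x y)^*.
Proof. by rewrite /formC -cconj_tr -{1}(cconj_cplx P) -!map_mxM mxE. Qed.

End Form.

Section Polarization.
Variables (n : nat) (P : 'M[rat]_n) (w : 'rV[CC]_n) (H : 'M[CC]_n).
Hypotheses (hodgeH : hodge_wt2_h20_1 w H) (polP : polarization P w H).

Lemma hodge_decomposition x :
  exists a b (h : 'rV_n), (h <= H)%MS /\ x = a *: w + h + b *: cconj w.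
Proof.
case: hodgeH => _ _ _ /(submx_full x)/submxP [u ->].
rewrite -[u]hsubmxK -[lsubmx u]hsubmxK !mul_row_col.
exists (lsubmx (lsubmx u) 0 0), (rsubmx u 0 0), (rsubmx (lsubmx u) *m H).
by split; [exact: submxMl | rewrite -!mul_scalar_mx -!mx11_scalar].
Qed.

Lemma polarization_orth_w h : (h <= H)%MS -> formC P w h = 0.
Proof.
case: polP => _ _ wH _ _ /submxP [u ->].
by rewrite /formC trmx_mul mulmxA wH mul0mx mxE.
Qed.

Lemma polarization_orth_conj_w h : (h <= H)%MS -> formC P (cconj w) h = 0.
Proof.
case: hodgeH => _ /andP [conjH_H _] _ _ hH.
rewrite -[h]cconjK formC_conj polarization_orth_w ?conjC0 //.
case/submxP: hH => u ->.
by rewrite /cconj map_mxM (submx_trans (submxMl _ _)).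
Qed.

(* A vector in the kernel of psi_C, split along V^{2,0} + V^{1,1} + V^{0,2},
   loses its outer components by pairing with w and conj w, and its middle
   component then contradicts the negativity of psi(x, conj x) on V^{1,1}. *)
Lemma polarization_det_neq0 : \det P != 0.
Proof.
case: polP => P_sym ww _ w_wbar H_neg.
apply/negP => /eqP detP0.
have /det0P [x x0 xP] : \det (cplx P) == 0.
  by rewrite /cplx det_map_mx detP0 rmorph0.
have x_orth y : formC P x y = 0 by rewrite /formC xP mul0mx mxE.
have [a [b [h [hH xE]]]] := hodge_decomposition x.
have wbar_wbar : formC P (cconj w) (cconj w) = 0 by rewrite formC_conj ww conjC0.
have w_wbar0 : formC P w (cconj w) != 0 by rewrite gt_eqF.
have b0 : b = 0.
  move: (x_orth w); rewrite xE !formCDl !formCZl (formC_sym h) //.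
  rewrite (formC_sym (cconj w)) // ww polarization_orth_w // mulr0 !add0r => /eqP.
  by rewrite mulf_eq0 (negPf w_wbar0) orbF => /eqP.
have a0 : a = 0.
  move: (x_orth (cconj w)); rewrite xE b0 !formCDl !formCZl wbar_wbar.
  rewrite (formC_sym h) // polarization_orth_conj_w // !mul0r !addr0.
  by move/eqP; rewrite mulf_eq0 (negPf w_wbar0) orbF => /eqP.
move: xE; rewrite a0 b0 !scale0r add0r addr0 => xh.
by have := H_neg x; rewrite xh hH -xh x_orth ltxx => /(_ isT x0).
Qed.

End Polarization.

Lemma totally_positive_nat_add_sqrt (d : nat) :
  (1 < d)%N -> totally_positive_quad d d%:R 1.
Proof.
move=> d_gt1 r r2d; rewrite ratr_nat rmorph1 mul1r.
have : 1 < d%:R :> RR by rewrite ltr1n.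
nra.
Qed.

Lemma isometric_det n (P1 P2 : 'M[rat]_n) :
  isometric P1 P2 -> exists t : rat, \det P1 = t ^+ 2 * \det P2.
Proof.
case=> g [_ <-]; exists (\det g).
by rewrite !det_mulmx det_tr; ring.
Qed.

Theorem mainTheorem9 (d : nat) (hd1 : (1 < d)%N) (hdsf : squarefree d)
    (m n : nat) (hn : n = (2 * m)%N) (hm : odd m)
    (P : 'M[rat]_n) (w : 'rV[CC]_n) (H : 'M[CC]_n) (S : 'M[rat]_n)
    (hK3 : K3_type P w H) (hEnd : End_hod_is_quad w H d S) :
  totally_positive_quad d d%:R 1 /\
  ~ isometric P (((d%:R)%:M + S) *m P).
Proof.
split; first exact: totally_positive_nat_add_sqrt.
case: hK3 => hodgeH polP _; case: hEnd => _ SSd _.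
have detP0 := polarization_det_neq0 hodgeH polP.
case/isometric_det => t.
rewrite det_mulmx (det_scalar_add_sqrt (squarefree_rat_nsqr hd1 hdsf) SSd).
have -> : n./2 = m by rewrite hn mul2n doubleK.
move=> detP; have : (d%:R ^+ 2 - d%:R) ^+ m * t ^+ 2 = 1 :> rat.
  by apply: (mulIf detP0); rewrite mul1r [in RHS]detP; ring.
case/(odd_expr_mul_sqr1 hm) => r.
have -> : d%:R ^+ 2 - d%:R = (d * d.-1)%N%:R :> rat.
  by rewrite -subn1 mulnBr muln1 natrB ?leq_pmulr ?(ltnW hd1) // natrM expr2.
by case/rat_sqr_natP => j /eqP; apply/negP/mul_pred_neq_sqr.
Qed.
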